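(* If $G$ is a connected digraph that is not regular, then $\vec{\chi}(G) \leq \Delta_{max}(G)$.
   Context: Digraphs have no loops and no parallel arcs, but may contain digons. A digraph is connected if its underlying undirected graph is connected. A digraph is $k$-regular if $d^+(v)=d^-(v)=k$ for every vertex $v$; it is regular if it is $k$-regular for some $k$. $\vec{\chi}(G)$ is the dichromatic number (minimum number of colours in a colouring of $V(G)$ with no monochromatic directed cycle), and $\Delta_{max}(G)=\max_v \max(d^+(v),d^-(v))$. *)

(* A relation has no parallel arcs; loops are
   excluded by the hypothesis irreflexive a in the theorem; digons are allowed. *)
From mathcomp Require Import all_boot.
From mathcomp Require Import boolp.
Set Implicit Arguments. Unset Strict Implicit. Unset Printing Implicit Defensive.

Section Digraph.
Variables (V : finType) (a : rel V).

Definition outdeg (v : V) : nat := #|[set y | a v y]|.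
Definition indeg (v : V) : nat := #|[set y | a y v]|.

Definition kregular (k : nat) : Prop := forall v, outdeg v = k /\ indeg v = k.
Definition regular : Prop := exists k, kregular k.

Definition underlying : rel V := fun x y => a x y || a y x.
Definition connected : Prop := forall x y : V, connect underlying x y.

Definition Delta_max : nat := \max_(v : V) maxn (outdeg v) (indeg v).

Definition dicycle (p : seq V) : Prop := p != [::] /\ uniq p /\ cycle a p.

Definition acyclic_colouring (k : nat) (f : V -> 'I_k) : Prop :=
  forall p : seq V, dicycle p -> ~ (exists c : 'I_k, all (fun v => f v == c) p).

Definition colourable (k : nat) : bool :=
  `[< exists f : V -> 'I_k, acyclic_colouring f >].

(* dichromatic number: least k admitting an acyclic k-colouring (such a k <= #|V|
   always exists for a loopless digraph; #|V| is the default otherwise) *)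
Definition dichromatic : nat :=
  \big[minn/#|V|]_(k < #|V|.+1 | colourable k) k.

End Digraph.

From mathcomp Require Import all_boot all_order.
From mathcomp Require Import boolp.
Set Implicit Arguments. Unset Strict Implicit. Unset Printing Implicit Defensive.
Import Order.TTheory.

(* Let D = Delta_max a.  Since a is not regular, some vertex r has out-degree
   or in-degree smaller than D.  We colour greedily, vertices far from r first:
   a colouring is extended to a new vertex v by giving v a colour that none of
   its already coloured out-neighbours (or none of its in-neighbours) carries.
   Then v lies on no monochromatic directed cycle, since its successor (resp.
   predecessor) on such a cycle would have v's colour.  Such a colour exists as
   soon as v has fewer than D coloured out- (or in-) neighbours.

   Connectivity then provides, for
   every S avoiding r, a vertex of S with a neighbour outside S, which makes
   the induction on #|S| go through; r itself is coloured last, using its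
   deficient degree. *)

Definition converse (T : Type) (e : rel T) : rel T := fun x y => e y x.

Section PartialColourings.
Variable V : finType.
Implicit Types (e : rel V) (S : {set V}).

Definition acyclic_on e k (f : V -> 'I_k) S : Prop :=
  forall p, dicycle e p -> {subset p <= S} -> ~ exists c, all (fun v => f v == c) p.

Definition recolour k (f : V -> 'I_k) v c : V -> 'I_k :=
  fun x => if x == v then c else f x.

Lemma acyclic_on_set0 e k (f : V -> 'I_k) : acyclic_on e f set0.
Proof. by move=> [|x p] [p0 _] // /(_ x); rewrite mem_head in_set0 => /(_ isT). Qed.

Lemma acyclic_on_setT e k (f : V -> 'I_k) :
  acyclic_on e f [set: V] -> acyclic_colouring e f.
Proof. by move=> acyc p dp; apply: acyc dp _ => x _; rewrite inE. Qed.

Lemma dicycle_rev e p : dicycle e p -> dicycle (converse e) (rev p).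
Proof.
case=> p0 [up cp]; split; first by rewrite -size_eq0 size_rev size_eq0.
by rewrite rev_uniq rev_cycle.
Qed.

(* Monochromatic cycles of e and of its converse correspond, so acyclicity
   transfers; this lets us prove the extension step in one direction only. *)
Lemma acyclic_on_converse e k (f : V -> 'I_k) S :
  acyclic_on (converse e) f S -> acyclic_on e f S.
Proof.
move=> acyc p /dicycle_rev dp pS [c mono].
apply: (acyc _ dp); last by exists c; rewrite all_rev.
by move=> x; rewrite mem_rev; apply: pS.
Qed.

Lemma recolour_out e k (f : V -> 'I_k) S v c :
  irreflexive e -> acyclic_on e f S ->
  (forall y, y \in S -> e v y -> f y != c) ->
  acyclic_on e (recolour f v c) (v |: S).
Proof.
move=> irr acyc_f c_free p dp pS [c' /allP mono].
have [_ [_ cp]] := dp.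
have in_S x : x \in p -> x != v -> x \in S.
  by move=> xp xv; have := pS x xp; rewrite in_setU1 (negbTE xv).
have colour_f x : x \in p -> x != v -> f x = c'.
  by move=> xp xv; have := mono x xp; rewrite /recolour (negbTE xv) => /eqP.
case vp: (v \in p).
- have := mono v vp; rewrite /recolour eqxx => /eqP c'c; subst c'.
  have yp : next p v \in p by rewrite mem_next.
  have vy : e v (next p v) := next_cycle cp vp.
  have yv : next p v != v by apply: contraTneq vy => ->; rewrite irr.
  by move: (c_free _ (in_S _ yp yv) vy); rewrite colour_f ?eqxx.
- have notv x : x \in p -> x != v.
    by move=> xp; apply: contraTneq xp => ->; rewrite vp.
  apply: (acyc_f p dp); first by move=> x xp; apply: in_S (notv x xp).
  by exists c'; apply/allP => x xp; rewrite colour_f ?notv.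
Qed.

Lemma recolour_in e k (f : V -> 'I_k) S v c :
  irreflexive e -> acyclic_on e f S ->
  (forall y, y \in S -> e y v -> f y != c) ->
  acyclic_on e (recolour f v c) (v |: S).
Proof.
move=> irr acyc_f c_free; apply: acyclic_on_converse.
by apply: recolour_out => //; apply: acyclic_on_converse.
Qed.

Lemma free_colour (T : finType) k (f : T -> 'I_k) (A : {set T}) :
  #|A| < k -> exists c : 'I_k, forall y, y \in A -> f y != c.
Proof.
move=> A_small; have : ~~ ([set: 'I_k] \subset f @: A).
  apply: contraL A_small => /subset_leq_card; rewrite cardsT card_ord -leqNgt.
  by move/leq_trans; apply; apply: leq_imset_card.
case/subsetPn=> c _ c_unused.
by exists c => y yA; apply: contraNneq c_unused => <-; apply: imset_f.
Qed.

Lemma extend_colouring e k (f : V -> 'I_k) S v :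
  irreflexive e -> acyclic_on e f S ->
  (#|[set y in S | e v y]| < k) || (#|[set y in S | e y v]| < k) ->
  exists g : V -> 'I_k, acyclic_on e g (v |: S).
Proof.
move=> irr acyc_f /orP[] /(free_colour f)[c c_free]; exists (recolour f v c).
  by apply: recolour_out => // y yS vy; apply: c_free; rewrite inE yS.
by apply: recolour_in => // y yS yv; apply: c_free; rewrite inE yS.
Qed.

Lemma card_neighbours_in_le e S v :
  #|[set y in S | e v y]| <= #|[set y | e v y]|.
Proof. by apply: subset_leq_card; apply/subsetP => y; rewrite !inE => /andP[]. Qed.

Lemma card_neighbours_in_lt e S v w :
  e v w -> w \notin S -> #|[set y in S | e v y]| < #|[set y | e v y]|.
Proof.
move=> vw wS; apply: proper_card; apply/properP; split.
  by apply/subsetP => y; rewrite !inE => /andP[].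
by exists w; rewrite !inE ?vw // (negbTE wS).
Qed.

Lemma connect_exit e S x r :
  x \in S -> r \notin S -> connect e x r ->
  exists u w, [/\ u \in S, w \notin S & e u w].
Proof.
move=> xS rS /connectP[p walk r_last]; subst r.
elim: p x xS walk rS => [|y p IH] x xS /=; first by move=> _; rewrite xS.
case/andP=> xy walk rS; case yS: (y \in S); first exact: IH yS walk rS.
by exists x, y; rewrite yS.
Qed.

End PartialColourings.

Section Greedy.
Variables (V : finType) (a : rel V) (k : nat).
Hypotheses (irr : irreflexive a) (conn : connected a) (k_gt0 : 0 < k).
Hypothesis deg_le : forall v, outdeg a v <= k /\ indeg a v <= k.

(* A vertex u of S adjacent to
   some w outside S has fewer than k neighbours in S :\ u on the side of w. *)
Lemma colour_avoiding_root (r : V) (S : {set V}) :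
  r \notin S -> exists f : V -> 'I_k, acyclic_on a f S.
Proof.
elim: #|S| {-2}S (leqnn #|S|) => [|n IH] {}S.
  rewrite leqn0 cards_eq0 => /eqP-> _.
  by exists (fun=> Ordinal k_gt0); apply: acyclic_on_set0.
move=> S_small rS; have [->|[x xS]] := set_0Vmem S.
  by exists (fun=> Ordinal k_gt0); apply: acyclic_on_set0.
have [u [w [uS wS uw]]] := connect_exit xS rS (conn x r).
have notin_Su z : z \notin S -> z \notin S :\ u.
  by move=> zS; rewrite in_setD1 (negbTE zS) andbF.
have [f acyc_f] : exists f : V -> 'I_k, acyclic_on a f (S :\ u).
  by apply: IH (notin_Su _ rS); move: S_small; rewrite (cardsD1 u S) uS add1n ltnS.
rewrite -(setD1K uS); apply: extend_colouring irr acyc_f _.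
have [out_u in_u] := deg_le u.
case/orP: uw => [uw | wu]; apply/orP; [left | right].
  exact: leq_trans (card_neighbours_in_lt uw (notin_Su _ wS)) out_u.
exact: leq_trans (card_neighbours_in_lt (e := converse a) wu (notin_Su _ wS)) in_u.
Qed.

End Greedy.

Section MaximumDegree.
Variables (V : finType) (a : rel V).

Lemma deg_le_Delta v : outdeg a v <= Delta_max a /\ indeg a v <= Delta_max a.
Proof.
have := leq_bigmax (F := fun v => maxn (outdeg a v) (indeg a v)) v.
by rewrite geq_max => /andP.
Qed.

Lemma nonregular_deficient :
  ~ regular a -> exists r, (outdeg a r < Delta_max a) || (indeg a r < Delta_max a).
Proof.
move=> nreg; apply: contrapT => no_deficient; apply: nreg.
exists (Delta_max a) => v; have [out_v in_v] := deg_le_Delta v.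
have : ~~ ((outdeg a v < Delta_max a) || (indeg a v < Delta_max a)).
  by apply/negP => deficient_v; apply: no_deficient; exists v.
rewrite negb_or -!leqNgt => /andP[out_ge in_ge].
by split; apply: anti_leq; rewrite ?out_v ?out_ge ?in_v ?in_ge.
Qed.

Lemma Delta_le_card : Delta_max a <= #|V|.
Proof.
by apply/bigmax_leqP => v _; rewrite geq_max /outdeg /indeg !max_card.
Qed.

Lemma dichromatic_le k : k <= #|V| -> colourable a k -> dichromatic a <= k.
Proof.
rewrite -ltnS => k_small col.
have := bigmin_le_cond #|V| (fun i : 'I_#|V|.+1 => i : nat)
  (j := Ordinal k_small) (P := fun i => colourable a i) col.
by rewrite minEnat leEnat.
Qed.

End MaximumDegree.

Theorem lemma2 (V : finType) (a : rel V) :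
  irreflexive a -> connected a -> ~ regular a ->
  dichromatic a <= Delta_max a.
Proof.
move=> irr conn nreg; have [r deficient] := nonregular_deficient nreg.
have D_gt0 : 0 < Delta_max a by case/orP: deficient; apply: leq_ltn_trans.
have rT : r \notin [set: V] :\ r by rewrite !inE eqxx.
have [f acyc_f] :=
  colour_avoiding_root irr conn D_gt0 (@deg_le_Delta _ a) rT.
have [g acyc_g] : exists g : V -> 'I_(Delta_max a), acyclic_on a g (r |: [set: V] :\ r).
  apply: extend_colouring irr acyc_f _.
  case/orP: deficient => [out_r | in_r]; apply/orP; [left | right].
    exact: leq_ltn_trans (card_neighbours_in_le _ _ _) out_r.
  exact: leq_ltn_trans (card_neighbours_in_le (converse a) _ _) in_r.
rewrite setD1K ?inE // in acyc_g.
apply: dichromatic_le (Delta_le_card a) _.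
by apply/asboolP; exists g; apply: acyclic_on_setT.
Qed.
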